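(* Let $f=a_1+2a_2+4a_3+8a_4\in\mathcal{GB}_n^{16}$ with $a_1,\dots,a_4\in\mathcal{B}_n$. If $f$ is gbent, then its Gray image $\psi(f)(\mathbf{x},y_1,y_2,y_3)=y_1a_1(\mathbf{x})\oplus y_2a_2(\mathbf{x})\oplus y_3a_3(\mathbf{x})\oplus a_4(\mathbf{x})\in\mathcal{B}_{n+3}$ is semibent if $n$ is odd, and $3$-plateaued if $n$ is even.
   Context: $\mathcal{B}_m$: Boolean functions $\mathbb{F}_2^m\to\mathbb{F}_2$; $\mathcal{GB}_n^q$: functions $\mathbb{F}_2^n\to\mathbb{Z}_q$ (Boolean values viewed as integers, sum in $\mathbb{Z}_{16}$). $\mathcal{H}^{(q)}_f(\mathbf{u})=\sum_{\mathbf{x}}\zeta_q^{f(\mathbf{x})}(-1)^{\mathbf{u}\cdot\mathbf{x}}$ with $\zeta_q=e^{2\pi i/q}$; $f$ is gbent if $|\mathcal{H}^{(q)}_f(\mathbf{u})|=2^{n/2}$ for all $\mathbf{u}$. $\mathcal{W}_g(\mathbf{w})=\sum_{\mathbf{z}}(-1)^{g(\mathbf{z})+\mathbf{w}\cdot\mathbf{z}}$. A Boolean function $g$ on $\mathbb{F}_2^m$ is $s$-plateaued if $|\mathcal{W}_g(\mathbf{w})|\in\{0,2^{(m+s)/2}\}$ for all $\mathbf{w}$; it is semibent if it is $1$-plateaued ($m$ odd) or $2$-plateaued ($m$ even). *)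

From HB Require Import structures.
From mathcomp Require Import all_boot all_order all_algebra all_field.
Set Implicit Arguments. Unset Strict Implicit. Unset Printing Implicit Defensive.
Import Order.TTheory GRing.Theory Num.Theory.
Local Open Scope ring_scope.

Definition bvec (n : nat) := {ffun 'I_n -> bool}.

Definition dotb n (u x : bvec n) : bool := \big[addb/false]_(i < n) (u i && x i).

Definition sgnC (b : bool) : algC := (-1) ^+ b.

(* zeta_16 = e^{2 pi i/16}: 8.-root (-1) is the 8th root of -1 with minimal
   nonnegative argument, i.e. e^{i pi/8}. *)
Definition zeta16 : algC := 8.-root (-1).

(* Generalized Walsh–Hadamard transform H^{(16)}_f(u), f : F_2^n -> Z_16
   (values represented by naturals, exponent taken of zeta16). *)
Definition gwalsh16 n (f : bvec n -> nat) (u : bvec n) : algC :=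
  \sum_(x : bvec n) zeta16 ^+ (f x) * sgnC (dotb u x).

Definition gbent16 n (f : bvec n -> nat) : Prop :=
  forall u : bvec n, `|gwalsh16 f u| = sqrtC (2%:R ^+ n).

Definition walsh m (g : bvec m -> bool) (w : bvec m) : algC :=
  \sum_(z : bvec m) sgnC (g z (+) dotb w z).

Definition plateaued m (s : nat) (g : bvec m -> bool) : Prop :=
  forall w : bvec m,
    `|walsh g w| = 0 \/ `|walsh g w| = sqrtC (2%:R ^+ (m + s)).

Definition semibent m (g : bvec m -> bool) : Prop :=
  if odd m then plateaued 1 g else plateaued 2 g.

Definition f16 n (a1 a2 a3 a4 : bvec n -> bool) (x : bvec n) : nat :=
  (a1 x + 2 * a2 x + 4 * a3 x + 8 * a4 x)%N.

(* Gray image psi(f)(x,y1,y2,y3) on F_2^(n+3): the first n coordinates are x,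
   the last three are y1,y2,y3. *)
Definition ord3_0 : 'I_3 := @Ordinal 3 0 isT.
Definition ord3_1 : 'I_3 := @Ordinal 3 1 isT.
Definition ord3_2 : 'I_3 := @Ordinal 3 2 isT.

Definition xpart n (z : bvec (n + 3)) : bvec n := [ffun i => z (lshift 3 i)].
Definition ypart n (z : bvec (n + 3)) (j : 'I_3) : bool := z (rshift n j).

Definition gray n (a1 a2 a3 a4 : bvec n -> bool) (z : bvec (n + 3)) : bool :=
  let x := xpart z in
  (ypart z ord3_0 && a1 x) (+) (ypart z ord3_1 && a2 x)
    (+) (ypart z ord3_2 && a3 x) (+) a4 x.

(* Write f = g + 8 a4 with g = a1 + 2 a2 + 4 a3 in {0..7}.  As zeta^8 = -1,
   H_f(u) = sum_(k < 8) c_k zeta^k, where c_k is the Walsh sum of a4 + u.x over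
   the fiber {g = k}; and the Walsh transform of the Gray image at (u, y) is
   8 c_k with k the binary number y.  Since 1, zeta, ..., zeta^7 are linearly
   independent over Q, |H_f(u)|^2 = 2^n says that the negacyclic
   autocorrelation of (c_k) is 2^n at shift 0 and vanishes elsewhere.  Such an
   integer sequence has all entries in {0, +-2^(n/2)}: for n >= 2 every
   autocorrelation is divisible by 4, which forces all c_k to be even, and
   halving the sequence lowers n by 2.  Hence every Walsh value of the Gray
   image is 0 or +-2^(n/2 + 3). *)

From mathcomp Require Import all_boot all_order all_algebra all_field.
From mathcomp Require Import zify ring.
Set Implicit Arguments. Unset Strict Implicit. Unset Printing Implicit Defensive.
Import Order.TTheory GRing.Theory Num.Theory.
Local Open Scope ring_scope.

Lemma zeta16_8 : zeta16 ^+ 8 = -1.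
Proof. by rewrite /zeta16 rootCK. Qed.

Lemma zeta16_16 : zeta16 ^+ 16 = 1.
Proof. by rewrite (exprM _ 8 2) zeta16_8 sqrrN expr1n. Qed.

Lemma prim_root_zeta16 : 16.-primitive_root zeta16.
Proof.
have [k prim_k dvd_k16] := prim_order_exists (isT : (0 < 16)%N) zeta16_16.
have /(dvdn_pfactor _ _ (isT : prime 2))[i le_i4 Dk] : (k %| 2 ^ 4)%N by [].
rewrite {dvd_k16}Dk in prim_k *.
have : ~~ (2 ^ i %| 2 ^ 3)%N.
  by rewrite (prim_order_dvd prim_k) zeta16_8 eq_sym -subr_eq0 opprK -mulr2n pnatr_eq0.
by rewrite dvdn_Pexp2l //; case: i le_i4 prim_k => [|[|[|[|[]]]]].
Qed.

Lemma size_minCpoly_zeta16 : size (minCpoly zeta16) = 9%N.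
Proof. by rewrite (minCpoly_cyclotomic prim_root_zeta16) size_cyclotomic. Qed.

Lemma zeta16_powers_free (b : nat -> int) :
  \sum_(0 <= e < 8) (b e)%:~R * zeta16 ^+ e = 0 -> forall e, (e < 8)%N -> b e = 0.
Proof.
move=> sum_b0 e lt_e8.
pose q : {poly rat} := \poly_(i < 8) (b i)%:~R.
have [p [Dp _] dvd_minpoly] := minCpolyP zeta16.
have q_root : root (map_poly ratr q) zeta16.
  rewrite /root /q poly_def rmorph_sum horner_sum; apply/eqP.
  rewrite -[RHS]sum_b0 big_mkord; apply: eq_bigr => i _.
  by rewrite /= map_polyZ map_polyXn hornerZ hornerXn rmorph_int.
have q0 : q = 0.
  apply/eqP; apply: contraT => nz_q.
  have := dvdp_leq nz_q (etrans (esym (dvd_minpoly q)) q_root).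
  have -> : size p = 9%N by rewrite -size_minCpoly_zeta16 Dp size_map_poly.
  by move/leq_trans/(_ (size_poly _ _)).
by have /eqP := congr1 (coefp e) q0; rewrite /= coef_poly lt_e8 coef0 intr_eq0 => /eqP.
Qed.

Lemma conj_zeta16 : zeta16^* = zeta16 ^+ 15.
Proof.
have norm1 : `|zeta16| = 1.
  by apply/eqP; rewrite -(@pexpr_eq1 _ _ 16) // -normrX zeta16_16 normr1.
by rewrite -[LHS]mulr1 -zeta16_16 exprS mulrA -normCKC norm1 expr1n mul1r.
Qed.

Definition nacorr (c : nat -> int) (e : nat) : int :=
  \sum_(0 <= j < 8) (if (j < e)%N then -1 else 1) * c j * c ((j + 8 - e) %% 8)%N.

Lemma nacorr0 c : nacorr c 0 = \sum_(0 <= j < 8) c j ^+ 2.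
Proof.
apply: eq_big_nat => j /andP[_ lt_j8].
by rewrite mul1r expr2 subn0 modnDr modn_small.
Qed.

Lemma nacorr_scale c e : nacorr (fun j => 2 * c j) e = 4 * nacorr c e.
Proof. by rewrite /nacorr mulr_sumr; apply: eq_bigr => j _; ring. Qed.

Lemma nacorr_ext c d e :
  (forall j, (j < 8)%N -> c j = d j) -> nacorr c e = nacorr d e.
Proof.
by move=> eq_cd; apply: eq_big_nat => j /andP[_ lt_j8]; rewrite !eq_cd ?ltn_pmod.
Qed.

Lemma nacorr_eqmod c d e k :
  (forall j, (k %| c j - d j)%Z) -> (k %| nacorr c e - nacorr d e)%Z.
Proof.
move=> dvd_cd; rewrite /nacorr -sumrB; apply: rpred_sum => j _.
set s := (if _ then _ else _); set i := ((j + 8 - e) %% 8)%N.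
have -> : s * c j * c i - s * d j * d i = s * ((c j - d j) * c i + d j * (c i - d i)).
  by ring.
by apply/dvdz_mull/rpredD; [apply: dvdz_mulr | apply: dvdz_mull].
Qed.

Definition zcomb (c : nat -> int) : algC := \sum_(0 <= k < 8) (c k)%:~R * zeta16 ^+ k.

Lemma zeta16X_conj_shift j e : (j < 8)%N -> (e < 8)%N ->
  zeta16 ^+ j * (zeta16 ^+ ((j + 8 - e) %% 8))^* =
  (if (j < e)%N then -1 else 1) * zeta16 ^+ e.
Proof.
move=> lt_j8 lt_e8; rewrite rmorphXn /= conj_zeta16 -exprM -exprD.
rewrite -(expr_mod _ zeta16_16); case: ltnP => [lt_je | le_ej].
  have -> : ((j + 15 * ((j + 8 - e) %% 8)) %% 16 = e + 8)%N by lia.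
  by rewrite exprD zeta16_8 mulrN1 mulN1r.
have -> : ((j + 15 * ((j + 8 - e) %% 8)) %% 16 = e)%N by lia.
by rewrite mul1r.
Qed.

Definition ord8_rsub (j : nat) (e : 'I_8) : 'I_8 :=
  Ordinal (ltn_pmod (j + 8 - e) (isT : (0 < 8)%N)).

Lemma ord8_rsubK j : (j < 8)%N -> involutive (ord8_rsub j).
Proof. by move=> lt_j8 e; apply: val_inj => /=; have := ltn_ord e; lia. Qed.

Lemma zcomb_normCK c :
  `|zcomb c| ^+ 2 = \sum_(0 <= e < 8) (nacorr c e)%:~R * zeta16 ^+ e.
Proof.
rewrite normCK /zcomb rmorph_sum mulr_suml.
under [RHS]eq_bigr do rewrite rmorph_sum mulr_suml.
rewrite [RHS]exchange_big; apply: eq_big_nat => j /andP[_ lt_j8].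
rewrite mulr_sumr !big_mkord (reindex_inj (inv_inj (ord8_rsubK lt_j8))).
apply: eq_bigr => e _ /=.
rewrite rmorphM /= rmorph_int mulrACA zeta16X_conj_shift //.
by rewrite !intrM; case: ifP => _; ring.
Qed.

Lemma nacorr_delta m c : `|zcomb c| ^+ 2 = 2%:R ^+ m ->
  forall e, (e < 8)%N -> nacorr c e = if e == 0%N then 2 ^+ m else 0.
Proof.
move=> norm_c e lt_e8; apply: subr0_eq; move: e lt_e8; apply: zeta16_powers_free.
under eq_bigr do rewrite intrB mulrBl.
rewrite sumrB -zcomb_normCK norm_c big_nat_recl // big1 => [|i _] /=.
  by rewrite rmorphXn /= mulr1 addr0 subrr.
by rewrite mul0r.
Qed.

Fixpoint tuples (T : Type) (s : seq T) (n : nat) : seq (seq T) :=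
  if n is n'.+1 then [seq x :: t | x <- s, t <- tuples s n'] else [:: [::]].

Lemma mem_tuples (T : eqType) (s t : seq T) :
  all (mem s) t -> t \in tuples s (size t).
Proof.
elim: t => //= x t IHt /andP[s_x s_t].
by apply/allpairsPdep; exists x, t; rewrite s_x IHt.
Qed.

(* Conceptually: 2 is totally ramified in Z[zeta16], so 4 | C C^* forces
   2 | C.  Only residues mod 4 matter, so this is a finite check. *)
Lemma nacorr_mod4_even_check :
  all (fun l : seq int => ~~ all (fun e => (nacorr (nth 0 l) e %% 4 == 0)%Z) (iota 0 8)
                          || all (fun x => (x %% 2 == 0)%Z) l)
      (tuples [:: 0; 1; 2; 3] 8).
Proof. by rewrite /nacorr unlock; vm_compute. Qed.

Lemma nacorr_dvd4_even (c : nat -> int) :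
  (forall e, (e < 8)%N -> (4 %| nacorr c e)%Z) -> forall j, (j < 8)%N -> (2 %| c j)%Z.
Proof.
move=> dvd4 j lt_j8.
pose r i := (c i %% 4)%Z.
have dvd_cr i : (4 %| c i - r i)%Z.
  by rewrite /r {1}(divz_eq (c i) 4) addrK dvdz_mull.
have [r0 r4] : (forall i, 0 <= r i) /\ (forall i, r i < 4).
  by split=> i; rewrite /r ?modz_ge0 ?ltz_pmod.
pose l := [seq r i | i <- iota 0 8].
have nth_l i : (i < 8)%N -> nth 0 l i = r i.
  by move=> lt_i8; rewrite (nth_map 0%N) ?size_iota // nth_iota.
have l_tuple : l \in tuples [:: 0; 1; 2; 3] 8.
  rewrite -[8%N](size_map r (iota 0 8)); apply: mem_tuples.
  apply/allP => _ /mapP[i _ ->]; have := r0 i; have := r4 i.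
  by rewrite !inE; lia.
have /orP[/negP[] | /allP/(_ (r j))] := allP nacorr_mod4_even_check l l_tuple.
  apply/allP => e; rewrite mem_iota add0n => /andP[_ lt_e8].
  rewrite (@nacorr_ext _ r) => [|i lt_i8]; last exact: nth_l.
  apply/eqP/dvdz_mod0P.
  have -> : nacorr r e = nacorr c e - (nacorr c e - nacorr r e) by ring.
  exact/rpredB/nacorr_eqmod/dvd_cr/dvd4.
rewrite -nth_l // mem_nth ?size_map ?size_iota // => /(_ isT)/eqP/dvdz_mod0P.
rewrite nth_l // => dvd2r.
rewrite -(subrK (r j) (c j)); apply: rpredD dvd2r.
by apply: dvdz_trans (dvd_cr j); rewrite (_ : 4 = 2 * 2) // dvdz_mulr.
Qed.

Lemma nacorr_delta_values m (c : nat -> int) :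
  (forall e, (e < 8)%N -> nacorr c e = if e == 0%N then 2 ^+ m else 0) ->
  forall j, (j < 8)%N -> c j = 0 \/ `|c j| = 2 ^+ m./2.
Proof.
elim/ltn_ind: m c => m IHm c delta_c j lt_j8.
have le_cj : c j ^+ 2 <= 2 ^+ m.
  have <- : \sum_(0 <= i < 8) c i ^+ 2 = 2 ^+ m by rewrite -nacorr0 delta_c.
  rewrite (bigD1_seq j) ?mem_index_iota ?iota_uniq //=.
  by rewrite lerDl sumr_ge0 // => i _; apply: sqr_ge0.
case: m IHm delta_c le_cj => [|[|m]] IHm delta_c le_cj.
1,2: by rewrite /= ?expr0 ?expr1 expr2 in le_cj *; nia.
have even_c : forall i, (i < 8)%N -> (2 %| c i)%Z.
  apply: nacorr_dvd4_even => e lt_e8; rewrite delta_c //.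
  by case: eqP => _; rewrite ?dvdz0 // !exprS mulrA dvdz_mulr.
pose c' i := (c i %/ 2)%Z.
have c2 i : (i < 8)%N -> c i = 2 * c' i by move=> lt_i8; rewrite mulrC divzK ?even_c.
have delta_c' e : (e < 8)%N -> nacorr c' e = if e == 0%N then 2 ^+ m else 0.
  move=> lt_e8; apply: (@mulfI _ 4) => //.
  rewrite -nacorr_scale -(nacorr_ext _ c2) delta_c //.
  by case: eqP => _; rewrite ?mulr0 // !exprS; ring.
rewrite c2 //= normrM exprS.
by case: (IHm m (leqnSn _) c' delta_c' j lt_j8) => ->; [left; rewrite mulr0 | right].
Qed.

Lemma big_nat_pred1 (V : nmodType) n k (F : nat -> V) :
  (k < n)%N -> \sum_(0 <= e < n) (if k == e then F e else 0) = F k.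
Proof.
move=> lt_kn; rewrite (bigD1_seq k) ?mem_index_iota ?iota_uniq //= eqxx big1 ?addr0 //.
by move=> e /negPf; rewrite eq_sym => ->.
Qed.

Definition bin3 (b0 b1 b2 : bool) : nat := b0 + 2 * b1 + 4 * b2.

Lemma bin3_lt8 b0 b1 b2 : (bin3 b0 b1 b2 < 8)%N.
Proof. by case: b0; case: b1; case: b2. Qed.

Definition fiber_walsh n (a1 a2 a3 a4 : bvec n -> bool) (u : bvec n) (k : nat) : int :=
  \sum_(x | bin3 (a1 x) (a2 x) (a3 x) == k) (-1) ^+ (a4 x (+) dotb u x).

Lemma sgnC_addb a b : sgnC (a (+) b) = sgnC a * sgnC b.
Proof. exact: signr_addb. Qed.

Lemma gwalsh16_f16 n (a1 a2 a3 a4 : bvec n -> bool) u :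
  gwalsh16 (f16 a1 a2 a3 a4) u = zcomb (fiber_walsh a1 a2 a3 a4 u).
Proof.
rewrite /zcomb /fiber_walsh.
under [RHS]eq_bigr do rewrite rmorph_sum mulr_suml big_mkcond.
rewrite exchange_big; apply: eq_bigr => x _ /=.
rewrite big_nat_pred1 ?bin3_lt8 // rmorph_sign signr_addb /f16 /sgnC -/(bin3 _ _ _).
by rewrite exprD exprM zeta16_8; ring.
Qed.

Definition flip m (i : 'I_m) (y : bvec m) : bvec m := [ffun k => y k (+) (k == i)].

Lemma flipK m (i : 'I_m) : involutive (flip i).
Proof. by move=> y; apply/ffunP => k; rewrite !ffunE -addbA addbb addbF. Qed.

Lemma dotb_flip m (p y : bvec m) i : dotb p (flip i y) = dotb p y (+) p i.
Proof.
rewrite /dotb; under eq_bigr do rewrite ffunE andb_addr.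
rewrite big_split /=; congr addb.
by rewrite (bigD1 i) //= eqxx andbT big1 ?addbF // => k /negPf ->; rewrite andbF.
Qed.

(* If p i holds, reindexing by flip i negates every term. *)
Lemma sum_sgnC_dotb m (p : bvec m) :
  \sum_(y : bvec m) sgnC (dotb p y) = if [forall i, ~~ p i] then (2 ^ m)%:R else 0.
Proof.
case: ifP => [/forallP p0 | /negbT/forallPn[i /negPn p_i]].
  rewrite (eq_bigr (fun _ => 1)) => [|y _]; last first.
    by rewrite /dotb big1 // => k _; rewrite (negbTE (p0 k)).
  by rewrite sumr_const card_ffun card_bool card_ord.
set S := \sum_y _; have : S = - S.
  rewrite {1}/S (reindex_inj (inv_inj (flipK i))) /= -sumrN.
  by apply: eq_bigr => y _; rewrite dotb_flip p_i sgnC_addb mulrN1.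
by move/eqP; rewrite -addr_eq0 -mulr2n mulrn_eq0 /= => /eqP.
Qed.

Definition join n m (x : bvec n) (y : bvec m) : bvec (n + m) :=
  [ffun i => match split i with inl a => x a | inr b => y b end].

Lemma join_lshift n m x y (i : 'I_n) : @join n m x y (lshift m i) = x i.
Proof. by rewrite ffunE (unsplitK (inl _ i)). Qed.

Lemma join_rshift n m x y (j : 'I_m) : @join n m x y (rshift n j) = y j.
Proof. by rewrite ffunE (unsplitK (inr _ j)). Qed.

Lemma sum_join (V : nmodType) n m (F : bvec (n + m) -> V) :
  \sum_z F z = \sum_(x : bvec n) \sum_(y : bvec m) F (join x y).
Proof.
rewrite pair_big (reindex (fun xy : bvec n * bvec m => join xy.1 xy.2)) //=.
exists (fun z => ([ffun i => z (lshift m i)], [ffun j => z (rshift n j)])).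
  move=> [x y] _ /=; congr pair; apply/ffunP => i.
  - by rewrite ffunE join_lshift.
  - by rewrite ffunE join_rshift.
move=> z _; apply/ffunP => i; rewrite ffunE -[in RHS](splitK i).
by case: (split i) => k; rewrite ffunE.
Qed.

Lemma dotb_join n m (w : bvec (n + m)) x y :
  dotb w (join x y) =
  dotb [ffun i => w (lshift m i)] x (+) dotb [ffun j => w (rshift n j)] y.
Proof.
rewrite /dotb big_split_ord; congr addb; apply: eq_bigr => i _.
  by rewrite join_lshift ffunE.
by rewrite join_rshift ffunE.
Qed.

Lemma dotb3 (p y : bvec 3) :
  dotb p y = (p ord3_0 && y ord3_0) (+) (p ord3_1 && y ord3_1) (+) (p ord3_2 && y ord3_2).
Proof.
rewrite /dotb !big_ord_recl big_ord0 addbF addbA.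
by congr (_ (+) _ (+) _); congr (p _ && y _); apply: val_inj.
Qed.

Lemma forall_ord3 (q : pred 'I_3) : [forall i, q i] = [&& q ord3_0, q ord3_1 & q ord3_2].
Proof.
apply/forallP/and3P => [q_all | [q0 q1 q2] [[|[|[|//]]] lt_i3]].
- by split; apply: q_all.
- by have -> : Ordinal lt_i3 = ord3_0 by apply: val_inj.
- by have -> : Ordinal lt_i3 = ord3_1 by apply: val_inj.
- by have -> : Ordinal lt_i3 = ord3_2 by apply: val_inj.
Qed.

Lemma walsh_gray n (a1 a2 a3 a4 : bvec n -> bool) (w : bvec (n + 3)) :
  walsh (gray a1 a2 a3 a4) w =
  8 * (fiber_walsh a1 a2 a3 a4 (xpart w)
         (bin3 (ypart w ord3_0) (ypart w ord3_1) (ypart w ord3_2)))%:~R.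
Proof.
rewrite /walsh sum_join /fiber_walsh [in RHS]big_mkcond rmorph_sum mulr_sumr.
apply: eq_bigr => x _; set u := xpart w; set v := ypart w.
pose p : bvec 3 := [ffun j => v j (+) nth false [:: a1 x; a2 x; a3 x] j].
transitivity (\sum_(y : bvec 3) sgnC (a4 x (+) dotb u x) * sgnC (dotb p y)).
  apply: eq_bigr => y _; rewrite -sgnC_addb /gray dotb_join !dotb3 !ffunE /=.
  have -> : xpart (join x y) = x by apply/ffunP => i; rewrite ffunE join_lshift.
  rewrite /u /v /xpart /ypart !join_rshift.
  move: (y ord3_0) (y ord3_1) (y ord3_2) (a1 x) (a2 x) (a3 x) (a4 x).
  move: (w (rshift n ord3_0)) (w (rshift n ord3_1)) (w (rshift n ord3_2)).
  by move: (dotb _ x); do 11!case.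
rewrite -mulr_sumr sum_sgnC_dotb forall_ord3 !ffunE /=.
have -> : [&& ~~ (v ord3_0 (+) a1 x), ~~ (v ord3_1 (+) a2 x) & ~~ (v ord3_2 (+) a3 x)] =
          (bin3 (a1 x) (a2 x) (a3 x) == bin3 (v ord3_0) (v ord3_1) (v ord3_2)).
  by move: (v ord3_0) (v ord3_1) (v ord3_2) (a1 x) (a2 x) (a3 x); do 6!case.
by case: eqP => _; rewrite ?mulr0 ?rmorph0 // rmorph_sign mulrC.
Qed.

Lemma gray_plateaued n (a1 a2 a3 a4 : bvec n -> bool) s :
  gbent16 (f16 a1 a2 a3 a4) -> (n + 3 + s)%N = (n./2 + 3).*2 ->
  plateaued s (gray a1 a2 a3 a4).
Proof.
move=> bent_f ns w; rewrite walsh_gray ns -muln2 exprM sqrCK ?exprn_ge0 ?ler0n //.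
set c := fiber_walsh a1 a2 a3 a4 (xpart w); set k := bin3 _ _ _.
have norm_c : `|zcomb c| ^+ 2 = 2%:R ^+ n by rewrite -gwalsh16_f16 bent_f sqrtCK.
have lt_k8 : (k < 8)%N by apply: bin3_lt8.
have [-> | c_max] := nacorr_delta_values (nacorr_delta norm_c) lt_k8.
  by left; rewrite rmorph0 mulr0 normr0.
by right; rewrite normrM -intr_norm c_max rmorphXn exprD ger0_norm // mulrC -(natrX _ 2 3).
Qed.

Theorem mainTheorem12 (n : nat) (a1 a2 a3 a4 : bvec n -> bool) :
  gbent16 (f16 a1 a2 a3 a4) ->
  (odd n -> semibent (gray a1 a2 a3 a4)) /\
  (~~ odd n -> plateaued 3 (gray a1 a2 a3 a4)).
Proof.
move=> bent_f; have n_halves := odd_double_half n.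
split=> [odd_n | even_n]; [rewrite /semibent oddD odd_n /= | ];
  apply: gray_plateaued => //; move: n_halves; rewrite ?odd_n ?(negbTE even_n); lia.
Qed.
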